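(* Let $(X,\preceq,\{H_n\})$ be a half-space order such that $(X,\preceq)$ is globally hyperbolic with respect to a given topology on $X$. Let $H$ be a group acting effectively and unboundedly by quasi-automorphisms on $(X,\preceq,\{H_n\})$, and let $T_X:H\to\mathbb{R}$ be the associated translation number. Then for every subgroup $G<H$ the following are equivalent: (i) $T_X|_G\equiv 0$; (ii) every $G$-orbit in $X$ is bounded; (iii) there exists a bounded $G$-orbit in $X$.
   Context: A half-space filtration of $X$ is $\{H_n\}_{n\in\mathbb{Z}}$ with $H_{n+1}\subsetneq H_n$, $\bigcap H_n=\emptyset$, $\bigcup H_n=X$; height $h(a)=\sup\{n: a\in H_n\}$, $h(a,b)=h(a)-h(b)$. A half-space order $(X,\preceq,\{H_n\})$: $(X,\preceq)$ a poset, $\{H_n\}$ a half-space filtration and for a constant $w$, $h(a,b)\geq w\Rightarrow a\succeq b$. An action is by quasi-automorphisms if for some $d$, $|h(ga,gb)-h(a,b)|\leq d$ for all $g,a,b$; unbounded if for some $g,a$, $h(g^na)\to\pm\infty$ as $n\to\pm\infty$. The translation number is $T_X(g)=\lim_{n\to\infty}h(g^na,a)/n$ (independent of $a$). $(X,\preceq)$ is globally hyperbolic if the intervals $[x,y]=\{z:x\preceq z\preceq y\}$ are compact and the sets $[x,\infty)=\{z: x\preceq z\}$, $(-\infty,x]=\{z:z\preceq x\}$ are closed. A subset of $X$ is bounded if its closure is compact. *)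

From mathcomp Require Import all_boot all_order all_algebra.
From mathcomp Require Import all_classical all_reals all_analysis.
Set Implicit Arguments. Unset Strict Implicit. Unset Printing Implicit Defensive.
Import Order.TTheory GRing.Theory Num.Theory.
Import numFieldNormedType.Exports.
Local Open Scope classical_set_scope.
Local Open Scope ring_scope.

Definition half_space_filtration (X : Type) (Hs : int -> set X) : Prop :=
  [/\ (forall n : int, Hs (n + 1) `<` Hs n),
      \bigcap_(n in [set: int]) Hs n = set0 &
      \bigcup_(n in [set: int]) Hs n = [set: X]].

Definition height (R : realType) (X : Type) (Hs : int -> set X) (a : X) : R :=
  sup [set (n%:~R : R) | n in [set n : int | Hs n a]].

Definition rel_height (R : realType) (X : Type) (Hs : int -> set X) (a b : X) : R :=
  height R Hs a - height R Hs b.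

Definition is_partial_order (X : Type) (le : X -> X -> Prop) : Prop :=
  [/\ (forall x, le x x),
      (forall x y, le x y -> le y x -> x = y) &
      (forall x y z, le x y -> le y z -> le x z)].

Definition half_space_order (R : realType) (X : Type) (le : X -> X -> Prop)
    (Hs : int -> set X) : Prop :=
  [/\ is_partial_order le, half_space_filtration Hs &
      exists w : R, forall a b, rel_height R Hs a b >= w -> le b a].

Definition ointerval (X : Type) (le : X -> X -> Prop) (x y : X) : set X :=
  [set z | le x z /\ le z y].
Definition up_set (X : Type) (le : X -> X -> Prop) (x : X) : set X :=
  [set z | le x z].
Definition down_set (X : Type) (le : X -> X -> Prop) (x : X) : set X :=
  [set z | le z x].

Definition globally_hyperbolic (X : topologicalType) (le : X -> X -> Prop) : Prop :=
  forall x y : X, [/\ compact (ointerval le x y),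
                      closed (up_set le x) & closed (down_set le x)].

Definition hbounded (X : topologicalType) (A : set X) : Prop :=
  compact (closure A).

Definition is_action (G : groupType) (X : Type) (act : G -> X -> X) : Prop :=
  (forall x, act 1%g x = x) /\
  (forall (g h : G) x, act (g * h)%g x = act g (act h x)).

Definition effective (G : groupType) (X : Type) (act : G -> X -> X) : Prop :=
  forall g : G, (forall x, act g x = x) -> g = 1%g.

Definition by_quasi_automorphisms (R : realType) (G : groupType) (X : Type)
    (act : G -> X -> X) (Hs : int -> set X) : Prop :=
  exists d : R, forall (g : G) (a b : X),
    `| rel_height R Hs (act g a) (act g b) - rel_height R Hs a b | <= d.

(* unbounded: for some g, a, h(g^n a) -> +oo as n -> +oo and -> -oo as n -> -oo
   (g^(-n) = (g^-1)^n) *)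
Definition unbounded_action (R : realType) (G : groupType) (X : Type)
    (act : G -> X -> X) (Hs : int -> set X) : Prop :=
  exists (g : G) (a : X),
    (fun n : nat => height R Hs (act (monoid.natexp g n) a)) @ \oo --> +oo /\
    (fun n : nat => height R Hs (act (monoid.natexp (monoid.inv g) n) a)) @ \oo --> -oo.

Definition transl_number (R : realType) (G : groupType) (X : Type)
    (act : G -> X -> X) (Hs : int -> set X) (g : G) (a : X) : R :=
  limn (fun n : nat => rel_height R Hs (act (monoid.natexp g n) a) a / n%:R).

Definition is_subgroup (G : groupType) (S : set G) : Prop :=
  [/\ S 1%g, (forall x y, S x -> S y -> S (x * y)%g) &
      (forall x, S x -> S (monoid.inv x))].

Definition orbit_of (G : groupType) (X : Type) (act : G -> X -> X)
    (S : set G) (x : X) : set X :=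
  [set act g x | g in S].

From mathcomp Require Import all_boot all_order all_algebra.
From mathcomp Require Import all_classical all_reals all_analysis.
From mathcomp Require Import ring lra.
Set Implicit Arguments. Unset Strict Implicit. Unset Printing Implicit Defensive.
Import Order.TTheory GRing.Theory Num.Theory.
Import numFieldNormedType.Exports.
Local Open Scope classical_set_scope.
Local Open Scope ring_scope.

(* A set is bounded iff its heights are bounded.  Let [p n] be a point of
   height [n].  A bounded-height set lies in an order interval [[p m, p m']],
   which is compact.  Conversely every point [z] fails to dominate some [p n],
   the up-sets of the [p n] are closed, and [~ p n <= z'] forces
   [h(z') < n + w]; by compactness finitely many such conditions cover a
   compact set, bounding its heights above (and dually below).
   For the translation number, [n |-> h(g^n x, x)] is [d]-quasi-additive, so
   [|T(g) - h(g x, x)| <= d]: vanishing translation numbers confine orbits to a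
   band of heights, while bounded heights along [g^n x] force
   [h(g^n a, a) / n -> 0]. *)

Section HalfSpaceFiltration.
Variables (R : realType) (X : Type) (Hs : int -> set X).
Hypothesis HF : half_space_filtration Hs.

Lemma half_space_antitone (i j : int) : i <= j -> Hs j `<=` Hs i.
Proof.
move=> lij; have [k ->] : exists k : nat, j = i + k%:Z.
  by exists `|j - i|%N; rewrite gez0_abs ?subr_ge0 // addrCA subrr addr0.
elim: k => [|k IH]; first by rewrite addr0.
have [+ _ _] := HF => /(_ (i + k%:Z)) /properW sub.
have -> : i + k.+1%:Z = i + k%:Z + 1 by rewrite -addrA -addn1 PoszD.
exact: subset_trans sub IH.
Qed.

Lemma heightE (n : int) (z : X) : Hs n z -> ~ Hs (n + 1) z ->
  height R Hs z = n%:~R.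
Proof.
move=> Hn Hn1; rewrite /height.
have ub : ubound [set (m%:~R : R) | m in [set m : int | Hs m z]] n%:~R.
  move=> _ [m /= Hm <-]; rewrite ler_int; case: (leP m n) => // lt.
  by exfalso; apply/Hn1/(@half_space_antitone (n + 1) m); rewrite ?lezD1.
apply/le_anti/andP; split; first by apply: ge_sup => //; exists n%:~R; exists n.
by apply: ub_le_sup; [exists n%:~R | exists n].
Qed.

Lemma height_surj (n : int) : exists z : X, height R Hs z = n%:~R.
Proof.
have [/(_ n) [_ /existsNP [z /not_implyP [Hn Hn1]]] _ _] := HF.
by exists z; apply: heightE.
Qed.

End HalfSpaceFiltration.

Definition quasi_additive {R : numDomainType} (a : nat -> R) (d : R) :=
  forall m n, `|a (m + n)%N - a m - a n| <= d.

Section QuasiAdditive.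
Variables (R : realType) (a : nat -> R) (d : R).
Hypothesis qa : quasi_additive a d.

Lemma quasi_additive_ge0 : 0 <= d.
Proof. exact: le_trans (normr_ge0 _) (qa 0 0). Qed.

Lemma quasi_additive_mulSn k n : `|a (k.+1 * n) - k.+1%:R * a n| <= k%:R * d.
Proof.
elim: k => [|k IH]; first by rewrite mul1n mul1r subrr normr0 mul0r.
have := qa n (k.+1 * n); rewrite -mulSn => h.
have -> : a (k.+2 * n) - k.+2%:R * a n
    = (a (k.+2 * n) - a n - a (k.+1 * n)) + (a (k.+1 * n) - k.+1%:R * a n).
  by rewrite -(addn1 k.+1) natrD; ring.
apply: le_trans (ler_normD _ _) _.
have -> : k.+1%:R * d = d + k%:R * d by rewrite -addn1 natrD; ring.
exact: lerD.
Qed.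

Lemma quasi_additive_avg_mulSn k n : (0 < n)%N ->
  `|a (k.+1 * n) / (k.+1 * n)%:R - a n / n%:R| <= d / n%:R.
Proof.
move=> n0; have npos : 0 < n%:R :> R by rewrite ltr0n.
have kpos : 0 < k.+1%:R :> R by rewrite ltr0n.
rewrite natrM.
have -> : a (k.+1 * n) / (k.+1%:R * n%:R) - a n / n%:R
    = (a (k.+1 * n) - k.+1%:R * a n) / (k.+1%:R * n%:R).
  by field; rewrite ?gt_eqF.
rewrite normrM normfV (ger0_norm (ltW (mulr_gt0 kpos npos))) -/(_ / _).
rewrite ler_pdivrMr ?mulr_gt0 //; apply: le_trans (quasi_additive_mulSn k n) _.
have -> : d / n%:R * (k.+1%:R * n%:R) = k.+1%:R * d by field; rewrite gt_eqF.
by rewrite ler_wpM2r ?quasi_additive_ge0 // ler_nat.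
Qed.

Lemma quasi_additive_avg_dist N M : (0 < N)%N -> (0 < M)%N ->
  `|a N / N%:R - a M / M%:R| <= d / N%:R + d / M%:R.
Proof.
move=> N0 M0.
have := quasi_additive_avg_mulSn M.-1 N0; rewrite prednK // => hN.
have := quasi_additive_avg_mulSn N.-1 M0; rewrite prednK // mulnC => hM.
have -> : a N / N%:R - a M / M%:R = - (a (M * N) / (M * N)%:R - a N / N%:R)
    + (a (M * N) / (M * N)%:R - a M / M%:R) by ring.
by apply: le_trans (ler_normD _ _) _; rewrite normrN lerD.
Qed.

Lemma quasi_additive_avg_cvg : cvgn (fun n => a n / n%:R).
Proof.
apply/cauchy_cvgP/cauchy_exP => e e0.
pose M := (Num.truncn (4 * d / e)).+1.
have hM : 4 * d / e < M%:R by apply: truncnS_gt.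
exists (a M / M%:R); exists M => // N /= MN.
rewrite -ball_normE /ball_ /=.
have N0 : (0 < N)%N by apply: leq_trans MN.
apply: le_lt_trans (quasi_additive_avg_dist (ltn0Sn _) N0) _.
have Mpos : 0 < M%:R :> R by rewrite ltr0n.
have dNM : d / N%:R <= d / M%:R.
  by rewrite ler_wpM2l ?quasi_additive_ge0 // lef_pV2 ?posrE ?ltr0n ?ler_nat.
have : d / M%:R < e / 2 by rewrite ltr_pdivrMr // ltr_pdivrMr // in hM *; nra.
rewrite -/M; lra.
Qed.

Lemma quasi_additive_lim_avg : `|limn (fun n => a n / n%:R) - a 1| <= d.
Proof.
have avg_near N : (0 < N)%N -> `|a N / N%:R - a 1| <= d.
  move=> N0; have := quasi_additive_avg_mulSn N.-1 (ltn0Sn 0).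
  by rewrite muln1 prednK // !divr1.
rewrite ler_norml; apply/andP; split.
  rewrite lerBrDr; apply: limr_ge; first exact: quasi_additive_avg_cvg.
  exists 1%N => // N /= /avg_near; rewrite ler_norml => /andP[h _]; lra.
rewrite lerBlDr; apply: limr_le; first exact: quasi_additive_avg_cvg.
exists 1%N => // N /= /avg_near; rewrite ler_norml => /andP[_ h]; lra.
Qed.

End QuasiAdditive.

Lemma bounded_divn_cvg0 (R : realType) (c : nat -> R) (B : R) :
  (forall n, `|c n| <= B) -> (fun n => c n / n%:R) @ \oo --> 0.
Proof.
move=> hB; apply/cvgrPdist_lt => e e0.
have B0 : 0 <= B by apply: le_trans (hB 0%N).
pose N := (Num.truncn (B / e)).+1.
have hN : B / e < N%:R by apply: truncnS_gt.
rewrite ltr_pdivrMr // in hN.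
exists N => // n /= Nn.
have npos : 0 < n%:R :> R by rewrite ltr0n (leq_trans _ Nn).
have nN : N%:R <= n%:R :> R by rewrite ler_nat.
rewrite sub0r normrN normrM normfV (ger0_norm (ltW npos)) -/(_ / _) ltr_pdivrMr //.
have := hB n; nra.
Qed.

Section CompactHeight.
Variables (R : realType) (X : topologicalType) (le : X -> X -> Prop).
Variables (ht : X -> R) (p : int -> X) (w : R).
Hypotheses (po : is_partial_order le)
  (le_of_ht : forall a b, w <= ht a - ht b -> le b a)
  (ht_p : forall n, ht (p n) = n%:~R)
  (up_closed : forall x, closed [set z | le x z]).

(* If [z] dominated every [p n] it would dominate [p m] above it, forcing
   [p m = p (m + k)], two points of different heights. *)
Lemma exists_level_not_below z : exists n, ~ le (p n) z.
Proof.
have [_ anti trans] := po.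
apply/existsNP => above.
pose m := Num.ceil (ht z + w); pose k := Num.ceil (Num.max w 1).
have hm : ht z + w <= m%:~R by exact: ceil_ge.
have hk : Num.max w 1 <= k%:~R by exact: ceil_ge.
have [wk k1] : w <= k%:~R /\ 1 <= k%:~R :> R.
  by split; apply: le_trans hk; rewrite le_max lexx ?orbT.
have zm : le z (p m) by apply: le_of_ht; rewrite ht_p; lra.
have mk : le (p m) (p (m + k)) by apply: le_of_ht; rewrite !ht_p rmorphD /=; lra.
have := congr1 ht (anti _ _ mk (trans _ _ _ (above (m + k)) zm)).
rewrite !ht_p rmorphD /=; lra.
Qed.

Lemma compact_ht_ub K : compact K -> exists M, forall z, K z -> ht z <= M.
Proof.
move/compact_near_coveringP => cK.
have loc x : K x -> \forall x' \near x & i \near \oo, ht x' < i%:R + w.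
  move=> _; have [n hn] := exists_level_not_below x.
  near=> x' i => /=.
  have np : ~ le (p n) x'.
    near: x'; apply: open_nbhs_nbhs; split => //.
    exact: closed_openC (@up_closed (p n)).
  have ni : n%:~R <= (i%:Z)%:~R :> R.
    rewrite ler_int (le_trans (lez_abs n)) // lez_nat.
    by near: i; exists `|n|%N.
  have : ht x' - ht (p n) < w by rewrite ltNge; apply/negP => /le_of_ht.
  rewrite ht_p -pmulrn in ni *; lra.
have [N _ hN] := cK nat \oo (fun i x => ht x < i%:R + w) _ loc.
by exists (N%:R + w) => z Kz; apply/ltW/(hN N (leqnn N)).
Unshelve. all: by end_near.
Qed.

End CompactHeight.

Section HalfSpaceOrder.
Variables (R : realType) (X : topologicalType) (le : X -> X -> Prop).
Variables (Hs : int -> set X) (w : R).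
Hypotheses (po : is_partial_order le) (HF : half_space_filtration Hs)
  (le_of_height : forall a b, w <= rel_height R Hs a b -> le b a)
  (GH : globally_hyperbolic le).

Local Notation h := (height R Hs).

Lemma exists_height_section : exists p : int -> X, forall n, h (p n) = n%:~R.
Proof. by have [p hp] := choice (height_surj R HF); exists p. Qed.

Lemma compact_height_ub K : compact K -> exists M, forall z, K z -> h z <= M.
Proof.
have [p hp] := exists_height_section.
apply: (compact_ht_ub po le_of_height hp).
by move=> x; have [] := GH x x.
Qed.

Lemma compact_height_lb K : compact K -> exists M, forall z, K z -> M <= h z.
Proof.
move=> cK; have [p hp] := exists_height_section.
have [refl anti trans] := po.
have dual_po : is_partial_order (fun a b => le b a).
  by split=> [x|x y ? ?|x y z yx zy]; [apply: refl | apply: anti | apply: trans zy yx].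
have dual_ge a b : w <= - h a - - h b -> le a b.
  by move=> ?; apply: le_of_height; rewrite /rel_height; lra.
have dual_p n : - h (p (- n)) = n%:~R by rewrite hp rmorphN opprK.
have down_closed x : closed [set z | le z x] by have [] := GH x x.
have [M hM] := compact_ht_ub (ht := fun z => - h z) dual_po dual_ge dual_p down_closed cK.
by exists (- M) => z /hM; rewrite lerNl.
Qed.

Lemma hbounded_height A : hbounded A -> exists M, forall z, A z -> `|h z| <= M.
Proof.
move=> bA; have [U hU] := compact_height_ub bA; have [L hL] := compact_height_lb bA.
exists (Num.max U (- L)) => z /subset_closure Az.
by rewrite ler_norml lerNl !le_max lerN2 (hU _ Az) (hL _ Az) orbT.
Qed.

Lemma height_band_hbounded A (lo hi : R) :
  (forall z, A z -> lo <= h z <= hi) -> hbounded A.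
Proof.
move=> band; have [p hp] := exists_height_section.
pose m := Num.ceil (w - lo); pose m' := Num.ceil (hi + w).
have sub : A `<=` ointerval le (p (- m)) (p m').
  move=> z /band /andP[zlo zhi]; have := ceil_ge (w - lo); have := ceil_ge (hi + w).
  by split; apply: le_of_height; rewrite /rel_height hp ?rmorphN; lra.
have [cpt up_cl _] := GH (p (- m)) (p m'); have [_ _ down_cl] := GH (p m') (p m').
apply: (subclosed_compact _ cpt); first exact: closed_closure.
by move=> z /(closureS sub); exact: closedI.
Qed.

End HalfSpaceOrder.

Lemma subgroup_natexp (H : groupType) (G : set H) (g : H) (n : nat) :
  is_subgroup G -> G g -> G (g ^+ n)%g.
Proof.
case=> G1 GM _ Gg; elim: n => [|n IH]; first by rewrite monoid.expg0.
by rewrite monoid.expgS; apply: GM.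
Qed.

Section QuasiAutomorphisms.
Variables (R : realType) (X : Type) (Hs : int -> set X).
Variables (H : groupType) (act : H -> X -> X) (d : R).
Hypotheses (actM : forall g g' x, act (g * g')%g x = act g (act g' x))
  (qaut : forall g a b,
     `|rel_height R Hs (act g a) (act g b) - rel_height R Hs a b| <= d).

Local Notation h := (height R Hs).

Lemma rel_height_iter_quasi_additive (g : H) (x : X) :
  quasi_additive (fun n => rel_height R Hs (act (g ^+ n)%g x) x) d.
Proof.
move=> m n; rewrite monoid.expgnDr actM.
set y := act (g ^+ n)%g x.
have -> : rel_height R Hs (act (g ^+ m)%g y) x - rel_height R Hs (act (g ^+ m)%g x) x
    - rel_height R Hs y x
  = rel_height R Hs (act (g ^+ m)%g y) (act (g ^+ m)%g x) - rel_height R Hs y x.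
  by rewrite /rel_height; ring.
exact: qaut.
Qed.

Lemma transl_number_rel_height (g : H) (x : X) :
  `|transl_number R act Hs g x - rel_height R Hs (act g x) x| <= d.
Proof. exact: quasi_additive_lim_avg (rel_height_iter_quasi_additive g x). Qed.

Lemma transl_number_eq0 (g : H) (x : X) (M : R) :
  (forall n, `|h (act (g ^+ n)%g x)| <= M) ->
  forall a, transl_number R act Hs g a = 0.
Proof.
move=> bdd a; apply: cvg_lim => //.
apply: (bounded_divn_cvg0 (B := d + M + `|h x|)) => n.
have := qaut (g ^+ n)%g a x; have := bdd n.
have : - `|h x| <= h x <= `|h x| by rewrite -ler_norml.
rewrite /rel_height !ler_norml => /andP[? ?] /andP[? ?] /andP[? ?].
by apply/andP; split; lra.
Qed.

End QuasiAutomorphisms.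

Theorem theorem2p7 (R : realType) (X : topologicalType) (le : X -> X -> Prop)
    (Hs : int -> set X) (H : groupType) (act : H -> X -> X) :
  half_space_order R le Hs ->
  globally_hyperbolic le ->
  is_action act -> effective act ->
  by_quasi_automorphisms R act Hs ->
  unbounded_action R act Hs ->
  forall G : set H, is_subgroup G ->
    [/\ ((forall g, G g -> forall a : X, transl_number R act Hs g a = 0) ->
           (forall x : X, hbounded (orbit_of act G x))),
        ((forall x : X, hbounded (orbit_of act G x)) ->
           (exists x : X, hbounded (orbit_of act G x))) &
        ((exists x : X, hbounded (orbit_of act G x)) ->
           (forall g, G g -> forall a : X, transl_number R act Hs g a = 0))].
Proof.
move=> [po HF [w le_of_height]] GH [_ actM] _ [d qaut] _ G subG.
split.
- move=> T0 x; apply: (height_band_hbounded HF le_of_height GH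
    (lo := height R Hs x - d) (hi := height R Hs x + d)) => _ [g Gg <-].
  have := transl_number_rel_height actM qaut g x.
  rewrite T0 // sub0r normrN ler_norml /rel_height => /andP[? ?].
  by apply/andP; split; lra.
- by have [x _] := height_surj R HF 0; exists x.
- move=> [x /(hbounded_height po HF le_of_height GH) [M hM]] g Gg a.
  apply: (transl_number_eq0 qaut (M := M)) => n.
  by apply: hM; exists (g ^+ n)%g => //; exact: subgroup_natexp.
Qed.
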